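(* Let $\mathbb{T}$ be a geometric theory over $\Sigma$. If $\mathbb{T}$ has enough models, then $\mathbb{T}$ has enough $\mathbb{S}$-indexed models, i.e.\ every geometric sequent over $\Sigma$ which is true in all $\mathbb{T}$-models in $M_\Sigma$ is provable in $\mathbb{T}$.
   Context: $\Sigma$ is a single-sorted first-order signature with equality, $\kappa\geq|\Sigma|+\aleph_0$ is an infinite cardinal, and $\mathbb{S}$ is a fixed set of cardinality at least $\kappa$. $M_\Sigma$ is the set of $\Sigma$-structures whose underlying set is a quotient of a subset of $\mathbb{S}$ ($\mathbb{S}$-indexed structures). A geometric theory has enough models if every geometric sequent true in all its (set-based) models is provable in it. *)

From mathcomp Require Import all_boot.

Set Implicit Arguments.
Unset Strict Implicit.
Unset Printing Implicit Defensive.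

Record signature := Signature {
  Fsym : Type;                 (* function symbols (constants = arity 0) *)
  Rsym : Type;
  farity : Fsym -> nat;
  rarity : Rsym -> nat }.

Definition card_le (A B : Type) : Prop := exists f : A -> B, injective f.

Section Geometric.
Variable Sg : signature.

Inductive term (n : nat) : Type :=
| Var : 'I_n -> term n
| App : forall f : Fsym Sg, ('I_(farity f) -> term n) -> term n.
Arguments Var {n} _ : assert.
Arguments App {n} f _ : assert.

Inductive form : nat -> Type :=
| FTop n : form n
| FEq n : term n -> term n -> form n
| FRel n (r : Rsym Sg) : ('I_(rarity r) -> term n) -> form n
| FAnd n : form n -> form n -> form n
| FDisj n (I : Type) : (I -> form n) -> form n
| FEx n : form n.+1 -> form n.
Arguments FRel {n} r _ : assert.

Definition FBot n : form n := @FDisj n False (fun x => match x with end).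

Fixpoint tsubst n m (s : 'I_n -> term m) (t : term n) : term m :=
  match t with
  | Var i => s i
  | App f a => App f (fun k => tsubst s (a k))
  end.

Definition shift n : 'I_n -> term n.+1 := fun k => Var (lift ord0 k).

Definition up n m (s : 'I_n -> term m) : 'I_n.+1 -> term m.+1 :=
  fun i => match unlift ord0 i with
           | None => Var ord0
           | Some j => tsubst (@shift m) (s j)
           end.

Fixpoint fsubst n (phi : form n) : forall m, ('I_n -> term m) -> form m :=
  match phi in form n return forall m, ('I_n -> term m) -> form m with
  | FTop _ => fun m _ => FTop m
  | FEq _ t u => fun m s => FEq (tsubst s t) (tsubst s u)
  | FRel _ r a => fun m s => FRel r (fun k => tsubst s (a k))
  | FAnd _ p q => fun m s => FAnd (fsubst p s) (fsubst q s)
  | FDisj _ J f => fun m s => FDisj (fun i => fsubst (f i) s)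
  | FEx _ p => fun m s => FEx (fsubst p (up s))
  end.

(* weakening: add a fresh variable (index 0) to the context *)
Definition wk n (phi : form n) : form n.+1 := fsubst phi (@shift n).

Definition eqs n m (s t : 'I_n -> term m) : form m :=
  foldr (fun i acc => FAnd (FEq (s i) (t i)) acc) (FTop m) (enum 'I_n).

Record sequent := Seq { sctx : nat; sante : form sctx; ssucc : form sctx }.

Definition theory := sequent -> Prop.

(* deduction system of geometric logic (Johnstone, Elephant D1.3.1) *)
Inductive provable (T : theory) : forall n, form n -> form n -> Prop :=
| pr_ax (s : sequent) : T s -> provable T (sante s) (ssucc s)
| pr_id n (p : form n) : provable T p p
| pr_subst n m (s : 'I_n -> term m) (p q : form n) :
    provable T p q -> provable T (fsubst p s) (fsubst q s)
| pr_cut n (p q r : form n) :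
    provable T p q -> provable T q r -> provable T p r
| pr_eq_refl n (i : 'I_n) : provable T (FTop n) (FEq (Var i) (Var i))
| pr_eq_repl n m (p : form n) (s t : 'I_n -> term m) :
    provable T (FAnd (eqs s t) (fsubst p s)) (fsubst p t)
| pr_top n (p : form n) : provable T p (FTop n)
| pr_and_l n (p q : form n) : provable T (FAnd p q) p
| pr_and_r n (p q : form n) : provable T (FAnd p q) q
| pr_and_intro n (p q r : form n) :
    provable T p q -> provable T p r -> provable T p (FAnd q r)
| pr_disj_intro n (I : Type) (f : I -> form n) (i : I) :
    provable T (f i) (FDisj f)
| pr_disj_elim n (I : Type) (f : I -> form n) (q : form n) :
    (forall i, provable T (f i) q) -> provable T (FDisj f) q
| pr_ex_elim n (p : form n.+1) (q : form n) :
    provable T p (wk q) -> provable T (FEx p) q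
| pr_ex_intro n (p : form n.+1) (q : form n) :
    provable T (FEx p) q -> provable T p (wk q)
| pr_distr n (p : form n) (I : Type) (f : I -> form n) :
    provable T (FAnd p (FDisj f)) (FDisj (fun i => FAnd p (f i)))
| pr_frob n (p : form n) (q : form n.+1) :
    provable T (FAnd p (FEx q)) (FEx (FAnd (wk p) q)).

Definition provable_seq (T : theory) (s : sequent) : Prop :=
  provable T (sante s) (ssucc s).

(* Sigma-structures (carrier may be empty) *)
Record structure := Structure {
  carrier : Type;
  fint : forall f : Fsym Sg, ('I_(farity f) -> carrier) -> carrier;
  rint : forall r : Rsym Sg, ('I_(rarity r) -> carrier) -> Prop }.

Fixpoint teval (M : structure) n (v : 'I_n -> carrier M) (t : term n)
  : carrier M :=
  match t with
  | Var i => v i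
  | App f a => @fint M f (fun k => teval v (a k))
  end.

Definition scons (X : Type) n (x : X) (v : 'I_n -> X) : 'I_n.+1 -> X :=
  fun i => match unlift ord0 i with None => x | Some j => v j end.

Fixpoint sat (M : structure) n (phi : form n) : ('I_n -> carrier M) -> Prop :=
  match phi in form n return ('I_n -> carrier M) -> Prop with
  | FTop _ => fun _ => True
  | FEq _ t u => fun v => teval v t = teval v u
  | FRel _ r a => fun v => @rint M r (fun k => teval v (a k))
  | FAnd _ p q => fun v => sat p v /\ sat q v
  | FDisj _ J f => fun v => exists i, sat (f i) v
  | FEx _ p => fun v => exists x : carrier M, sat p (scons x v)
  end.

Definition true_in (M : structure) (s : sequent) : Prop :=
  forall v : 'I_(sctx s) -> carrier M, sat (sante s) v -> sat (ssucc s) v.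

Definition is_model (M : structure) (T : theory) : Prop :=
  forall s, T s -> true_in M s.

Definition enough_models (T : theory) : Prop :=
  forall s : sequent, (forall M : structure, is_model M T -> true_in M s) ->
    provable_seq T s.

(* M is S-indexed (M in M_Sigma): its underlying set is a quotient of a
   subset of S, i.e. the surjective image of a subset of S. *)
Definition S_indexed (S : Type) (M : structure) : Prop :=
  exists (A : S -> Prop) (q : {x : S | A x} -> carrier M),
    forall y : carrier M, exists a, q a = y.

End Geometric.

(* A downward Loewenheim-Skolem argument.  Given a model M of T and a valuation
   v of the antecedent of s, close the values of v under the function symbols
   and under Skolem functions for all regular (disjunction-free) formulas.  A
   geometric formula true at a tuple is implied by one of its regular disjuncts
   true there, so on geometric formulas the resulting substructure N agrees
   with M: N is a model of T, and s true in N yields the succedent at v in M.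
   The points of N are values of terms over Sigma and the Skolem symbols,
   finite trees over an alphabet of size at most kappa; as kappa * kappa = kappa
   for infinite kappa (by Zorn's lemma), they are indexed by a subset of S. *)

From mathcomp Require Import all_boot.
From mathcomp Require Import boolp classical_sets.

Set Implicit Arguments.
Unset Strict Implicit.
Unset Printing Implicit Defensive.

Local Open Scope classical_set_scope.

Lemma card_le_trans (A B C : Type) : card_le A B -> card_le B C -> card_le A C.
Proof. by move=> [f finj] [g ginj]; exists (g \o f); exact: inj_comp. Qed.

Lemma choice_on (A B : Type) (b0 : B) (P : A -> Prop) (R : A -> B -> Prop) :
  (forall a, P a -> exists b, R a b) -> exists f : A -> B, forall a, P a -> R a (f a).
Proof.
move=> PR; have /choice[f fP] : forall a, exists b, P a -> R a b.
  move=> a; case: (pselect (P a)) => [/PR[b Rab]|nPa]; first by exists b.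
  by exists b0 => /nPa.
by exists f.
Qed.

Definition functional_rel (X Y : Type) (R : set (X * Y)) :=
  forall x y y', R (x, y) -> R (x, y') -> y = y'.

Definition injective_rel (X Y : Type) (R : set (X * Y)) :=
  forall x x' y, R (x, y) -> R (x', y) -> x = x'.

Lemma bigcup_chain2 (T : Type) (F : set (set T)) (Q : T -> T -> Prop) :
  total_on F subset -> (forall X, F X -> forall t t', X t -> X t' -> Q t t') ->
  forall t t', (\bigcup_(X in F) X) t -> (\bigcup_(X in F) X) t' -> Q t t'.
Proof.
move=> Ftot FQ t t' [X FX Xt] [Y FY Yt'].
have [XY|YX] := Ftot _ _ FX FY; first by apply: (FQ Y) => //; exact: XY.
by apply: (FQ X) => //; exact: YX.
Qed.

Lemma bigcup_functional (X Y : Type) (F : set (set (X * Y))) :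
  total_on F subset -> (forall R, F R -> functional_rel R) ->
  functional_rel (\bigcup_(R in F) R).
Proof.
move=> Ftot Ffun x y y' Rxy Rxy'.
apply: (bigcup_chain2 (Q := fun t t' => t.1 = t'.1 -> t.2 = t'.2)) Rxy Rxy' _ => //.
by move=> R /Ffun Rfun [a b] [a' b'] Rab Rab' /= Ea; subst a'; exact: Rfun Rab Rab'.
Qed.

Lemma bigcup_injective (X Y : Type) (F : set (set (X * Y))) :
  total_on F subset -> (forall R, F R -> injective_rel R) ->
  injective_rel (\bigcup_(R in F) R).
Proof.
move=> Ftot Finj x x' y Rxy Rx'y.
apply: (bigcup_chain2 (Q := fun t t' => t.2 = t'.2 -> t.1 = t'.1)) Rxy Rx'y _ => //.
by move=> R /Finj Rinj [a b] [a' b'] Rab Rab' /= Eb; subst b'; exact: Rinj Rab Rab'.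
Qed.

Section Pairing.
Variable K : Type.

Definition embedding (U V : set K) (h : K -> K) :=
  (forall x, U x -> V (h x)) /\ (forall x y, U x -> U y -> h x = h y -> x = y).

Definition partial_inj (U V : set K) (H : set (K * K)) :=
  [/\ forall x y, H (x, y) -> U x /\ V y, functional_rel H & injective_rel H].

Lemma partial_inj_bigcup (U V : set K) (F : set (set (K * K))) :
  F `<=` partial_inj U V -> total_on F subset ->
  partial_inj U V (\bigcup_(H in F) H).
Proof.
move=> FP Ftot; split.
- by move=> x y [H /FP[HUV _ _] /HUV].
- by apply: bigcup_functional => // H /FP[].
- by apply: bigcup_injective => // H /FP[].
Qed.

Lemma embedding_total (k0 : K) (U V : set K) :
  (exists h, embedding U V h) \/ (exists h, embedding V U h).
Proof.
have [H [[HUV Hfun Hinj] Hmax]] := Zorn_bigcup (@partial_inj_bigcup U V).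
case: (pselect (forall x, U x -> exists y, H (x, y))) => [Utot|].
  left; have [h hH] := choice_on k0 Utot; exists h; split.
    by move=> x /hH /HUV[].
  by move=> x y /hH Hx /hH Hy Exy; apply: Hinj Hx _; rewrite Exy.
move=> /existsNP[x0 /not_implyP[Ux0 nx0]].
case: (pselect (forall y, V y -> exists x, H (x, y))) => [Vtot|].
  right; have [h hH] := choice_on (R := fun y x => H (x, y)) k0 Vtot.
  exists h; split; first by move=> y /hH /HUV[].
  by move=> x y /hH Hx /hH Hy Exy; apply: Hfun Hx _; rewrite Exy.
move=> /existsNP[y0 /not_implyP[Vy0 ny0]].
have H0 : ~ H (x0, y0) by move=> Hxy; apply: nx0; exists y0.
exfalso; apply: (Hmax (H `|` [set (x0, y0)])).
  by split=> [t Ht|sub]; [left|apply/H0/sub; right].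
split.
- by move=> x y [/HUV //|[-> ->]].
- move=> x y y' [Hxy|/pair_equal_spec[-> ->]] [Hxy'|/pair_equal_spec[Ex ->]] //.
  + exact: Hfun Hxy Hxy'.
  + by case: nx0; exists y; rewrite -Ex.
  + by case: nx0; exists y'.
- move=> x x' y [Hxy|/pair_equal_spec[-> ->]] [Hx'y|/pair_equal_spec[-> Ey]] //.
  + exact: Hinj Hxy Hx'y.
  + by case: ny0; exists x; rewrite -Ey.
  + by case: ny0; exists x'.
Qed.

Lemma embedding_inv (k0 : K) (U V : set K) (h : K -> K) :
  embedding U V h -> exists h', embedding (h @` U) U h'.
Proof.
move=> [_ hinj].
have [h' h'P] : exists h', forall z, (h @` U) z -> U (h' z) /\ h (h' z) = z.
  apply: (choice_on (P := h @` U) (R := fun z x => U x /\ h x = z) k0).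
  by move=> z [x Ux <-]; exists x.
exists h'; split=> [z /h'P[] //|z z' /h'P[_ Ez] /h'P[_ Ez'] E].
by rewrite -Ez -Ez' E.
Qed.

Definition pairing_on (A : set K) (g : K -> K -> K) :=
  (forall x y, A x -> A y -> A (g x y)) /\
  (forall x y x' y', A x -> A y -> A x' -> A y' ->
     g x y = g x' y' -> x = x' /\ y = y').

Lemma pairing_on_union (A C : set K) (g : K -> K -> K) (h : K -> K) (a0 a1 : K) :
  pairing_on A g -> A a0 -> A a1 -> a0 <> a1 -> embedding C A h ->
  exists f, embedding (A `|` C) A f.
Proof.
move=> [gA ginj] Aa0 Aa1 a01 [hA hinj].
exists (fun x => if pselect (A x) then g x a0 else g (h x) a1); split.
  move=> x ACx; case: pselect => Ax; apply: gA => //.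
  by case: ACx => // /hA.
move=> x y ACx ACy.
have Cx : ~ A x -> C x by case: ACx.
have Cy : ~ A y -> C y by case: ACy.
case: pselect => Ax; case: pselect => Ay E.
- by have [] := ginj _ _ _ _ Ax Aa0 Ay Aa0 E.
- by have [_ /a01] := ginj _ _ _ _ Ax Aa0 (hA _ (Cy Ay)) Aa1 E.
- by have [_ /esym/a01] := ginj _ _ _ _ (hA _ (Cx Ax)) Aa1 Ay Aa0 E.
- have [Exy _] := ginj _ _ _ _ (hA _ (Cx Ax)) Aa1 (hA _ (Cy Ay)) Aa1 E.
  exact: hinj (Cx Ax) (Cy Ay) Exy.
Qed.

Definition pairing_dom (G : set (K * K * K)) : set K := [set x | exists z, G ((x, x), z)].

(* G is the graph of an injection from A * A into A, where A is recovered from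
   the diagonal of G. *)
Definition partial_pairing (G : set (K * K * K)) :=
  [/\ functional_rel G, injective_rel G,
      forall x y, pairing_dom G x -> pairing_dom G y -> exists z, G ((x, y), z) &
      forall x y z, G ((x, y), z) -> [/\ pairing_dom G x, pairing_dom G y & pairing_dom G z]].

Lemma pairing_dom_sub (G G' : set (K * K * K)) : G `<=` G' -> pairing_dom G `<=` pairing_dom G'.
Proof. by move=> GG' x [z Gz]; exists z; exact: GG'. Qed.

Lemma partial_pairing_bigcup (F : set (set (K * K * K))) :
  F `<=` partial_pairing -> total_on F subset ->
  partial_pairing (\bigcup_(G in F) G).
Proof.
move=> FP Ftot; have FU G : F G -> G `<=` \bigcup_(G in F) G by exact: bigcup_sup.
split.
- by apply: bigcup_functional => // G /FP[].
- by apply: bigcup_injective => // G /FP[].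
- move=> x y [zx [G1 F1 G1x]] [zy [G2 F2 G2y]].
  have [G [FG xG yG]] : exists G, [/\ F G, pairing_dom G x & pairing_dom G y].
    have [G12|G21] := Ftot _ _ F1 F2.
      by exists G2; split=> //; [exists zx; exact: G12|exists zy].
    by exists G1; split=> //; [exists zx|exists zy; exact: G21].
  have [_ _ Gtot _] := FP _ FG; have [z Gz] := Gtot _ _ xG yG.
  by exists z; exact: FU Gz.
- move=> x y z [G FG Gxyz].
  case: (FP _ FG) => _ _ _ /(_ _ _ _ Gxyz)[xG yG zG].
  by split; apply: (pairing_dom_sub (FU _ FG)).
Qed.

Lemma partial_pairing_fun (k0 : K) (G : set (K * K * K)) :
  partial_pairing G -> exists g, pairing_on (pairing_dom G) g.
Proof.
case=> _ Ginj Gtot Gcl.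
have [g gG] : exists g : K * K -> K,
    forall t, pairing_dom G t.1 /\ pairing_dom G t.2 -> G (t, g t).
  apply: (choice_on (P := fun t => pairing_dom G t.1 /\ pairing_dom G t.2)
                    (R := fun t z => G (t, z)) k0).
  by move=> [x y] [/= xG yG]; exact: Gtot.
exists (fun x y => g (x, y)); split.
  by move=> x y xG yG; have [] := Gcl _ _ _ (gG (x, y) (conj xG yG)).
move=> x y x' y' xG yG x'G y'G E.
have := gG (x', y') (conj x'G y'G); rewrite -E.
by move/(Ginj _ _ _ (gG (x, y) (conj xG yG)))/pair_equal_spec.
Qed.

(* If A embeds into its complement via h, the pairing on A extends to
   A `|` h @` A: the new pairs embed into A * A, hence into A, hence into
   h @` A, which is disjoint from A. *)
Section Extension.
Variables (G : set (K * K * K)) (g : K -> K -> K) (h k : K -> K).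
Let A := pairing_dom G.
Let B := h @` A.
Hypotheses (GP : partial_pairing G) (gP : pairing_on A g)
  (hP : embedding A (~` A) h) (kP : embedding (A `|` B) A k).

Let F x y := h (g (k x) (k y)).

Let BnA z : B z -> ~ A z.
Proof. by case=> x Ax <-; exact: hP.1. Qed.

Let FB x y : (A `|` B) x -> (A `|` B) y -> B (F x y).
Proof. by move=> /kP.1 kx /kP.1 ky; exists (g (k x) (k y)) => //; exact: gP.1. Qed.

Let F_inj x y x' y' : (A `|` B) x -> (A `|` B) y -> (A `|` B) x' -> (A `|` B) y' ->
  F x y = F x' y' -> x = x' /\ y = y'.
Proof.
move=> ABx ABy ABx' ABy'; have [kA kinj] := kP.
move/(hP.2 _ _ (gP.1 _ _ (kA _ ABx) (kA _ ABy)) (gP.1 _ _ (kA _ ABx') (kA _ ABy'))).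
case/(gP.2 _ _ _ _ (kA _ ABx) (kA _ ABy) (kA _ ABx') (kA _ ABy')).
by move=> /(kinj _ _ ABx ABx') -> /(kinj _ _ ABy ABy') ->.
Qed.

Definition pairing_ext : set (K * K * K) :=
  G `|` [set t | [/\ (A `|` B) t.1.1, (A `|` B) t.1.2,
                     ~ (A t.1.1 /\ A t.1.2) & t.2 = F t.1.1 t.1.2]].

Lemma pairing_dom_ext : pairing_dom pairing_ext = A `|` B.
Proof.
apply/seteqP; split=> x; first by case=> z [Gz|[]//]; left; exists z.
move=> ABx; case: (pselect (A x)) => [[z Gz]|nAx]; first by exists z; left.
by exists (F x x); right; split=> // -[].
Qed.

Lemma partial_pairing_ext : partial_pairing pairing_ext.
Proof.
have [Gfun Ginj Gtot Gcl] := GP.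
rewrite /partial_pairing pairing_dom_ext; split.
- move=> [x y] z z' [Gz|[_ _ nA /= ->]] [Gz'|[_ _ nA' /= ->]] //.
  + exact: Gfun Gz Gz'.
  + by case: nA'; case: (Gcl _ _ _ Gz).
  + by case: nA; case: (Gcl _ _ _ Gz').
- move=> [x y] [x' y'] z [Gz|[ABx ABy _ /= Ez]] [Gz'|[ABx' ABy' _ /= Ez']].
  + exact: Ginj Gz Gz'.
  + by case: (Gcl _ _ _ Gz) => _ _; rewrite Ez' => /(BnA (FB ABx' ABy')).
  + by case: (Gcl _ _ _ Gz') => _ _; rewrite Ez => /(BnA (FB ABx ABy)).
  + by case: (F_inj ABx ABy ABx' ABy' (etrans (esym Ez) Ez')) => /= -> ->.
- move=> x y ABx ABy; case: (pselect (A x /\ A y)) => [[Ax Ay]|nA].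
    by have [z Gz] := Gtot _ _ Ax Ay; exists z; left.
  by exists (F x y); right.
- move=> x y z [Gz|[ABx ABy _ /= ->]]; last by split=> //; right; exact: FB.
  by case: (Gcl _ _ _ Gz) => Ax Ay Az; split; left.
Qed.

Lemma pairing_ext_proper : A !=set0 -> G `<` pairing_ext.
Proof.
move=> [a Aa]; split=> [t Gt|sub]; first by left.
have Bha : B (h a) by exists a.
have /sub Gt : pairing_ext ((h a, h a), F (h a) (h a)).
  by right; split=> //=; [right|right|case=> /(BnA Bha)].
exact: BnA Bha (ex_intro _ _ Gt).
Qed.

End Extension.

Lemma partial_pairing_extend (G : set (K * K * K)) (g : K -> K -> K) (a0 a1 : K) :
  partial_pairing G -> pairing_on (pairing_dom G) g -> pairing_dom G a0 -> pairing_dom G a1 ->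
  a0 <> a1 -> (exists h, embedding (pairing_dom G) (~` pairing_dom G) h) ->
  exists G', partial_pairing G' /\ G `<` G'.
Proof.
move=> GP gP Ga0 Ga1 a01 [h hP].
have [h' h'P] := embedding_inv a0 hP.
have [k kP] := pairing_on_union gP Ga0 Ga1 a01 h'P.
exists (pairing_ext G g h k); split; first exact: partial_pairing_ext GP gP hP kP.
by apply: (pairing_ext_proper g k hP); exists a0.
Qed.

Lemma maximal_partial_pairing (e : nat -> K) : injective e ->
  exists G, [/\ partial_pairing G, forall a, pairing_dom G (e a) &
                forall G', G `<` G' -> ~ partial_pairing G'].
Proof.
move=> einj.
pose G0 : set (K * K * K) := [set t | exists a b,
  [/\ t.1.1 = e a, t.1.2 = e b & t.2 = e (pickle (a, b))]].
have G0e a : pairing_dom G0 (e a) by exists (e (pickle (a, a))), a, a.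
have G0P : partial_pairing G0.
  split.
  - by move=> [x y] z z' [a [b [/= -> -> ->]]] [a' [b' [/= /einj-> /einj-> ->]]].
  - move=> [x y] [x' y'] z [a [b [/= -> -> ->]]] [a' [b' [/= -> ->]]].
    by move/einj/(pcan_inj pickleK)/pair_equal_spec=> [-> ->].
  - move=> x y [_ [a [_ [/= -> _ _]]]] [_ [b [_ [/= -> _ _]]]].
    by exists (e (pickle (a, b))), a, b.
  - by move=> x y z [a [b [/= -> -> ->]]]; split; apply: G0e.
(* Zorn needs the empty union to qualify, hence the disjunct [G = set0]. *)
pose P G := partial_pairing G /\ (G0 `<=` G \/ G = set0).
have [G [[GP G0G] Gmax]] : exists G, P G /\ forall G', G `<` G' -> ~ P G'.
  apply: Zorn_bigcup => F FP Ftot; split.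
    by apply: partial_pairing_bigcup => // G /FP[].
  have [[G FG G0G]|noG0] := pselect (exists2 G, F G & G0 `<=` G).
    by left; apply: subset_trans G0G _; exact: bigcup_sup.
  right; apply/seteqP; split=> // t [G FG Gt].
  by case: (FP _ FG) => _ [G0G|G_0]; [case: noG0; exists G|rewrite G_0 in Gt].
have G0G' : G0 `<=` G.
  case: G0G => // G_0; exfalso; apply: (Gmax G0); last by split=> //; left.
  rewrite G_0; split=> // sub.
  by have [z /sub] := G0e 0.
exists G; split=> //.
  by move=> a; apply: (pairing_dom_sub G0G').
move=> G' GG' G'P; apply: (Gmax G' GG'); split=> //; left.
exact: subset_trans G0G' GG'.1.
Qed.

End Pairing.

Lemma card_le_square (K : Type) : card_le nat K -> card_le (K * K) K.
Proof.
move=> [e einj].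
have [G [GP Ge Gmax]] := maximal_partial_pairing einj.
have [g gP] := partial_pairing_fun (e 0) GP.
have e01 : e 0 <> e 1 by move/einj.
have [hP|[h hP]] := embedding_total (e 0) (pairing_dom G) (~` pairing_dom G).
  have [G' [G'P GG']] := partial_pairing_extend GP gP (Ge 0) (Ge 1) e01 hP.
  by case: (Gmax _ GG' G'P).
have [f [fA finj]] := pairing_on_union gP (Ge 0) (Ge 1) e01 hP.
have AC x : (pairing_dom G `|` ~` pairing_dom G) x by case: (pselect (pairing_dom G x)); [left|right].
exists (fun t => g (f t.1) (f t.2)) => -[x y] [x' y'] /= E.
have [fx fy] := gP.2 _ _ _ _ (fA _ (AC x)) (fA _ (AC y)) (fA _ (AC x')) (fA _ (AC y')) E.
by rewrite (finj _ _ (AC x) (AC x') fx) (finj _ _ (AC y) (AC y') fy).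
Qed.

Lemma S_indexed_surj Sg (S W : Type) (M : structure Sg) (q : W -> carrier M)
    (c : W -> S) :
  (forall y, exists w, q w = y) -> injective c -> S_indexed S M.
Proof.
move=> qsurj cinj; exists (fun x => exists w, c w = x).
exists (fun a : {x | exists w, c w = x} => q (sval (cid (svalP a)))) => y.
have [w <-] := qsurj y; exists (exist _ (c w) (ex_intro _ w erefl)).
by congr q; case: cid => w' /= /cinj.
Qed.

Lemma S_indexed_empty Sg (S : Type) (M : structure Sg) :
  (carrier M -> False) -> S_indexed S M.
Proof.
move=> empty; apply: (@S_indexed_surj _ _ _ M id (fun x => False_rect S (empty x))).
  by move=> y; exists y.
by move=> x; case: (empty x).
Qed.

Section SkolemHull.
Variable Sg : signature.

Inductive regular_form : nat -> Type :=
| RTop n : regular_form n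
| REq n : term Sg n -> term Sg n -> regular_form n
| RRel n (r : Rsym Sg) : ('I_(rarity r) -> term Sg n) -> regular_form n
| RAnd n : regular_form n -> regular_form n -> regular_form n
| REx n : regular_form n.+1 -> regular_form n.

Fixpoint form_of_regular n (rho : regular_form n) : form Sg n :=
  match rho with
  | RTop n => FTop Sg n
  | REq _ t u => FEq t u
  | RRel _ r a => @FRel Sg _ r a
  | RAnd _ p q => FAnd (form_of_regular p) (form_of_regular q)
  | REx _ p => FEx (form_of_regular p)
  end.

Lemma sat_regular_disjunct (M : structure Sg) n (phi : form Sg n)
    (b : 'I_n -> carrier M) :
  sat phi b -> exists rho : regular_form n,
    sat (form_of_regular rho) b /\
    forall b' : 'I_n -> carrier M, sat (form_of_regular rho) b' -> sat phi b'.
Proof.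
elim: phi b => {n}.
- by move=> n b _; exists (RTop n).
- by move=> n t u b ?; exists (REq t u).
- by move=> n r a b ?; exists (RRel a).
- move=> n p IHp q IHq b [/IHp[rp [sp ip]] /IHq[rq [sq iq]]].
  by exists (RAnd rp rq); split=> // b' [/ip ? /iq ?].
- move=> n I f IH b [i /IH[r [sr ir]]].
  by exists r; split=> // b' /ir; exists i.
- move=> n p IH b [y /IH[r [sr ir]]].
  exists (REx r); split; first by exists y.
  by move=> b' [y' /ir]; exists y'.
Qed.

(* Each regular formula with a distinguished last variable gets a Skolem
   function symbol, whose arity is the number of remaining variables. *)
Definition skolem_sig : signature :=
  @Signature (Fsym Sg + {m : nat & regular_form m.+1}) (Rsym Sg)
    (fun f => match f with inl f => farity f | inr (existT m _) => m end)
    (@rarity Sg).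

Section Hull.
Variables (M : structure Sg) (d : carrier M).

Definition skolem_witness m (phi : form Sg m.+1) (b : 'I_m -> carrier M) :=
  @xget {classic carrier M} d [set y | sat phi (scons y b)].

Lemma skolem_witnessP m (phi : form Sg m.+1) (b : 'I_m -> carrier M) :
  (exists y, sat phi (scons y b)) -> sat phi (scons (skolem_witness phi b) b).
Proof. exact: (@xgetPex {classic carrier M}). Qed.

Definition skolem_expansion : structure skolem_sig :=
  @Structure skolem_sig (carrier M)
    (fun f => match f return ('I_(@farity skolem_sig f) -> _) -> _ with
              | inl f => @fint _ M f
              | inr (existT m rho) => skolem_witness (form_of_regular rho)
              end)
    (@rint _ M).

Variables (n : nat) (v : 'I_n -> carrier M).

Definition hull_carrier :=
  {x : carrier M | exists w : term skolem_sig n,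
     @teval _ skolem_expansion _ v w = x}.

Definition hull_term (x : hull_carrier) : term skolem_sig n :=
  sval (cid (svalP x)).

Lemma hull_termK (x : hull_carrier) :
  @teval _ skolem_expansion _ v (hull_term x) = sval x.
Proof. exact: svalP (cid (svalP x)). Qed.

Definition hull_point (w : term skolem_sig n) : hull_carrier :=
  exist _ (@teval _ skolem_expansion _ v w) (ex_intro _ w erefl).

Lemma hull_pointK (x : hull_carrier) : hull_point (hull_term x) = x.
Proof. by case: x => x px; apply: eq_exist; rewrite hull_termK. Qed.

Definition hull_fun f (a : 'I_(farity f) -> hull_carrier) : hull_carrier :=
  hull_point (@App skolem_sig n (inl f) (fun k => hull_term (a k))).

Definition hull : structure Sg :=
  @Structure Sg hull_carrier hull_fun (fun r a => @rint _ M r (sval \o a)).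

Lemma teval_hull m (a : 'I_m -> carrier hull) (t : term Sg m) :
  sval (teval a t) = teval (sval \o a) t.
Proof.
elim: t => // f args IH /=.
by congr fint; apply: funext => k; rewrite hull_termK; exact: IH.
Qed.

Lemma sval_scons m (x : carrier hull) (a : 'I_m -> carrier hull) :
  sval \o scons x a = scons (sval x) (sval \o a).
Proof. by apply: funext => i; rewrite /= /scons; case: unlift. Qed.

Lemma sat_hull m (phi : form Sg m) (a : 'I_m -> carrier hull) :
  sat phi a <-> sat phi (sval \o a).
Proof.
elim: phi a => {m}.
- by [].
- move=> m t u a /=; rewrite -!teval_hull; split=> [->//|E].
  by case: (teval a t) (teval a u) E => x px [y py] /= E; exact: eq_exist.
- move=> m r args a /=.
  by have -> : sval \o (fun k => teval a (args k)) = fun k => teval (sval \o a) (args k)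
    by apply: funext => k; exact: teval_hull.
- by move=> m p IHp q IHq a /=; rewrite IHp IHq.
- by move=> m I f IH a /=; split=> -[i /IH]; exists i.
- move=> m p IH a /=; split=> [[x /IH]|[y /sat_regular_disjunct[rho [sr ir]]]].
    by rewrite sval_scons; exists (sval x).
  pose w := @App skolem_sig n (inr (existT _ m rho)) (fun k => hull_term (a k)).
  have Ew : sval (hull_point w) = skolem_witness (form_of_regular rho) (sval \o a).
    by rewrite /=; congr skolem_witness; apply: funext => k; exact: hull_termK.
  exists (hull_point w); apply/IH; rewrite sval_scons Ew; apply: ir.
  by apply: skolem_witnessP; exists y.
Qed.

Lemma hull_is_model (T : theory Sg) : is_model M T -> is_model hull T.
Proof. by move=> MT s Ts a /sat_hull/(MT s Ts)/sat_hull. Qed.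

Definition hull_var (i : 'I_n) : carrier hull := hull_point (Var _ i).

Lemma sat_hull_var (phi : form Sg n) : sat phi hull_var <-> sat phi v.
Proof. exact: sat_hull. Qed.

Lemma hull_S_indexed (S : Type) :
  card_le (term skolem_sig n) S -> S_indexed S hull.
Proof.
move=> [c cinj]; apply: (@S_indexed_surj _ _ _ hull hull_point c) => // y.
by exists (hull_term y); exact: hull_pointK.
Qed.

End Hull.
End SkolemHull.

Section Encoding.
Variables (K : Type) (p : K * K -> K) (e : nat -> K).
Hypotheses (pinj : injective p) (einj : injective e).

Lemma p_inj x y x' y' : p (x, y) = p (x', y') -> x = x' /\ y = y'.
Proof. by move/pinj=> [-> ->]. Qed.

Fixpoint enc_seq (s : seq K) : K :=
  if s is x :: s then p (e 1, p (x, enc_seq s)) else p (e 0, e 0).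

Lemma enc_seq_inj : injective enc_seq.
Proof.
elim=> [|x s IH] [|y t] //= /p_inj[/einj] // _.
by case/p_inj=> -> /IH ->.
Qed.

Definition enc_fam k (F : 'I_k -> K) : K := enc_seq (map F (enum 'I_k)).

Lemma enc_fam_inj k : injective (@enc_fam k).
Proof.
move=> F G /enc_seq_inj/eq_in_map EFG; apply: funext => i.
by apply: EFG; exact: mem_enum.
Qed.

Section Terms.
Variables (Sg : signature) (kf : Fsym Sg -> K).
Hypothesis kfinj : injective kf.

Fixpoint enc_term n (t : term Sg n) : K :=
  match t with
  | Var i => p (e 0, e i)
  | App f a => p (e 1, p (kf f, enc_fam (fun k => enc_term (a k))))
  end.

Lemma enc_term_inj n : injective (@enc_term n).
Proof.
elim=> [i|f a IH] [j|g b] /= /p_inj[/einj] // _.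
  by move/einj/ord_inj ->.
case/p_inj=> /kfinj Efg; subst g => /enc_fam_inj Eab.
by congr App; apply: funext => k; apply: IH; exact: (congr1 (@^~ k) Eab).
Qed.

Variables (kr : Rsym Sg -> K).
Hypothesis krinj : injective kr.

Fixpoint enc_regular n (rho : regular_form Sg n) : K :=
  match rho with
  | RTop _ => p (e 0, e 0)
  | REq _ t u => p (e 1, p (enc_term t, enc_term u))
  | RRel _ r a => p (e 2, p (kr r, enc_fam (fun k => enc_term (a k))))
  | RAnd _ rho1 rho2 => p (e 3, p (enc_regular rho1, enc_regular rho2))
  | REx _ rho => p (e 4, enc_regular rho)
  end.

Lemma enc_regular_inj n : injective (@enc_regular n).
Proof.
move=> rho; induction rho as [n|n t u|n r a|n rho1 IH1 rho2 IH2|n rho IH];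
  intros rho'; destruct rho' as [n|n t' u'|n r' a'|n rho1' rho2'|n rho'];
  move=> /= /p_inj[/einj] // _.
- by case/p_inj=> /enc_term_inj -> /enc_term_inj ->.
- case/p_inj=> /krinj Er; subst r' => /enc_fam_inj Ea.
  by congr RRel; apply: funext => k; apply: enc_term_inj; exact: (congr1 (@^~ k) Ea).
- by case/p_inj=> /IH1 -> /IH2 ->.
- by move/IH ->.
Qed.

Definition enc_skolem (f : Fsym (skolem_sig Sg)) : K :=
  match f with
  | inl f => p (e 0, kf f)
  | inr (existT m rho) => p (e 1, p (e m, enc_regular rho))
  end.

Lemma enc_skolem_inj : injective enc_skolem.
Proof.
case=> [f|[m rho]] [g|[m' rho']] /= /p_inj[/einj] // _.
  by move/kfinj ->.
by case/p_inj=> /einj Em; subst m' => /enc_regular_inj ->.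
Qed.

End Terms.
End Encoding.

Lemma card_le_skolem_term Sg (K : Type) n :
  card_le nat K -> card_le (K * K) K -> card_le (Fsym Sg + Rsym Sg) K ->
  card_le (term (skolem_sig Sg) n) K.
Proof.
move=> [e einj] [p pinj] [k kinj].
have kfinj : injective (k \o inl) by move=> f g /kinj[].
have krinj : injective (k \o inr) by move=> r r' /kinj[].
exists (@enc_term _ p e _ (enc_skolem p e (k \o inl) (k \o inr)) n).
exact: (enc_term_inj pinj einj (enc_skolem_inj pinj einj kfinj krinj)).
Qed.

Theorem lemma2p1 (Sg : signature) (K S : Type)
  (hK_inf : card_le nat K)
  (hK_sig : card_le (Fsym Sg + Rsym Sg) K)
  (hS : card_le K S)
  (T : theory Sg) :
  enough_models T ->
  forall s : sequent Sg,
    (forall M : structure Sg, S_indexed S M -> is_model M T -> true_in M s) ->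
    provable_seq T s.
Proof.
move=> enough s Hs; apply: enough => M MT v vante.
have [empty|d] := pselectT (carrier M).
  exact: Hs M (S_indexed_empty S empty) MT v vante.
have NS : S_indexed S (hull d v).
  apply/hull_S_indexed/(card_le_trans _ hS).
  exact: card_le_skolem_term hK_inf (card_le_square hK_inf) hK_sig.
have Nmodel := hull_is_model (d := d) (v := v) MT.
have Nante : sat (sante s) (hull_var d v) by exact/sat_hull_var.
by apply/sat_hull_var; exact: Hs _ NS Nmodel _ Nante.
Qed.
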